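(* For every $j\in\tfrac12\mathbb{N}^+$ and $1\le a,b\le 2j+1$, the $(a,b)$-entry of $K^{(j)}(t)$ equals \[ K^{(j)}_{(a,b)}(t)=\psi(a,b,j)\,t^{b-a-2j}\,y^{b-2j-1}\widetilde\Delta^{(-2j)}(-t^2)x^{1-a}, \qquad \psi(a,b,j)=q^{\rho(a,b,j)}\big([2j]_q^!\big)^{-1}\Big(\frac{[b-1]_q^![2j+1-a]_q^!}{[a-1]_q^![2j+1-b]_q^!}\Big)^{1/2}. \]
   Context: $\mathbb{F}$ is a field of characteristic zero in which every element has a square root; $q\in\mathbb{F}$ is nonzero and not a root of unity, with a fixed square root $q^{1/2}$ ($q^{k/2}:=(q^{1/2})^k$). Square roots $(\cdot)^{1/2}$ of ratios below are fixed choices in $\mathbb{F}$, chosen so that $\big(\frac{B}{A}\big)^{1/2}=\frac{B}{A}\big(\frac{A}{B}\big)^{1/2}$. $[n]_q=\frac{q^n-q^{-n}}{q-q^{-1}}$, $[n]_q^!=[n]_q\cdots[1]_q$, $[0]_q^!=1$. $\tfrac12\mathbb{N}^+=\{\tfrac12,1,\tfrac32,\dots\}$. $\mathbb{V}$ is the free algebra on letters $x,y$ with basis the words ($\mathbf 1$ empty word); $t$ an indeterminate. $\bar x=1,\bar y=-1$; a word $a_1\cdots a_n$ is Catalan if $\bar a_1+\dots+\bar a_i\ge0$ ($i<n$) and $\bar a_1+\dots+\bar a_n=0$; $\mathrm{Cat}_n$ = Catalan words of length $2n$. $\Delta^{(m)}_n=\sum_{a_1\cdots a_{2n}\in\mathrm{Cat}_n}\prod_{i=1}^{2n}[\bar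 a_1+\dots+\bar a_{i-1}+m(\bar a_i+1)/2]_q\,a_1\cdots a_{2n}$, $\Delta^{(m)}(t)=\sum_n\Delta^{(m)}_nt^n$; $\widetilde\Delta^{(m)}_n$ is obtained from $\Delta^{(m)}_n$ by interchanging $x$ and $y$ in every word, $\widetilde\Delta^{(m)}(t)=\sum_n\widetilde\Delta^{(m)}_nt^n$; $\Delta^{(m)}(-t^2)=\sum_n(-1)^n\Delta^{(m)}_nt^{2n}$, etc. Deletion: $x^{-1}w$ deletes a leading $x$ of a word $w$ (result $0$ if $w$ does not start with $x$, including $w=\mathbf 1$); $y^{-1}w$, $wx^{-1}$, $wy^{-1}$ analogously (leading $y$, trailing $x$, trailing $y$); extended linearly and coefficientwise; negative exponent $-k$ means $k$-fold application, exponent $0$ the identity. $\rho(a,b,j)=(a^2+b^2+6j^2+4ab-6aj-6bj-6a-6b+13j+6)/2$. $K^{(j)}(t)$ is the $(2j+1)\times(2j+1)$ matrix with $K^{(j)}_{(a,b)}(t)=\varphi(a,b,j)t^{a-b-2j}x^{1-b}\Delta^{(-2j)}(-t^2)y^{a-2j-1}$, where $\varphi(a,b,j)=q^{\rho(a,b,j)}([2j]_q^!)^{-1}\big(\frac{[a-1]_q^![2j+1-b]_q^!}{[b-1]_q^![2j+1-a]_q^!}\big)^{1/2}$. *)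

From HB Require Import structures.
From mathcomp Require Import all_boot all_order all_algebra.
Set Implicit Arguments. Unset Strict Implicit. Unset Printing Implicit Defensive.
Import Order.TTheory GRing.Theory Num.Theory.
Local Open Scope ring_scope.

Section Defs.
Variable F : fieldType.

Definition word := seq bool.
Definition lx : bool := true.
Definition ly : bool := false.

Definition bar (c : bool) : int := if c then 1 else -1.

Definition psum (w : word) (i : nat) : int :=
  \sum_(k < i) bar (nth ly w k).

Definition catalan (w : word) : bool :=
  all (fun i => 0 <= psum w i) (iota 1 (size w).-1) && (psum w (size w) == 0).

Definition qint (q : F) (k : int) : F := (q ^ k - q ^ (- k)) / (q - q^-1).
Definition qfact (q : F) (k : nat) : F := \prod_(1 <= i < k.+1) qint q i%:Z.

(* Elements of V[[t^{+-1}]]: coefficient of t^k times word w. *)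
Definition ser := int -> word -> F.

Definition Deltan (q : F) (m : int) (n : nat) (w : word) : F :=
  if (size w == 2 * n)%N && catalan w then
    \prod_(i < size w) qint q (psum w i + divz (m * (bar (nth ly w i) + 1)) 2)
  else 0.

Definition DeltaS (q : F) (m : int) : ser :=
  fun k w => if 0 <= k then Deltan q m `|k|%N w else 0.

(* f(-t^2) for a power series f(t) *)
Definition negsq (f : ser) : ser :=
  fun k w => if (0 <= k) && ~~ odd `|k|%N
             then (-1) ^+ (`|k| %/ 2)%N * f (`|k| %/ 2)%N%:Z w else 0.

Definition swapxy (f : ser) : ser := fun k w => f k (map negb w).

Definition tpow (e : int) (f : ser) : ser := fun k w => f (k - e) w.

Definition sscale (s : F) (f : ser) : ser := fun k w => s * f k w.

Definition lmul (c : bool) (k : nat) (f : ser) : ser :=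
  fun i w => if take k w == nseq k c then f i (drop k w) else 0.
Definition rmul (c : bool) (k : nat) (f : ser) : ser :=
  fun i w => if drop (size w - k) w == nseq k c then f i (take (size w - k) w)
             else 0.
Definition ldel (c : bool) (k : nat) (f : ser) : ser :=
  fun i w => f i (nseq k c ++ w).
Definition rdel (c : bool) (k : nat) (f : ser) : ser :=
  fun i w => f i (w ++ nseq k c).

(* c^e f  and  f c^e  for integer exponents e (negative = deletion) *)
Definition lpow (c : bool) (e : int) (f : ser) : ser :=
  if e <= 0 then ldel c `|e|%N f else lmul c `|e|%N f.
Definition rpow (c : bool) (e : int) (f : ser) : ser :=
  if e <= 0 then rdel c `|e|%N f else rmul c `|e|%N f.

Definition rhoK (a b : nat) (n : nat) : rat :=
  let a := a%:R in let b := b%:R in let j := n%:R / 2 in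
  (a ^+ 2 + b ^+ 2 + 6 * j ^+ 2 + 4 * a * b - 6 * a * j - 6 * b * j
   - 6 * a - 6 * b + 13 * j + 6) / 2.

(* q^r for r in (1/2)Z, with q^{k/2} := (q^{1/2})^k *)
Definition qhpow (qh : F) (r : rat) : F := qh ^ (numq (2 * r)).

Definition qratio (q : F) (n a b : nat) : F :=
  (qfact q (a - 1) * qfact q (n + 1 - b)) / (qfact q (b - 1) * qfact q (n + 1 - a)).

Definition phiK (q qh : F) (sq : F -> F) (n a b : nat) : F :=
  qhpow qh (rhoK a b n) * (qfact q n)^-1 * sq (qratio q n a b).

Definition psiK (q qh : F) (sq : F -> F) (n a b : nat) : F :=
  qhpow qh (rhoK a b n) * (qfact q n)^-1 * sq (qratio q n b a).

(* the (a,b)-entry of K^{(j)}(t), n = 2j *)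
Definition Kentry (q qh : F) (sq : F -> F) (n a b : nat) : ser :=
  sscale (phiK q qh sq n a b)
    (tpow (a%:Z - b%:Z - n%:Z)
       (lpow lx (1 - b%:Z)
          (rpow ly (a%:Z - n%:Z - 1) (negsq (DeltaS q (- n%:Z)))))).

Definition Kmat (q qh : F) (sq : F -> F) (n : nat) : 'M[ser]_(n.+1) :=
  \matrix_(i < n.+1, k < n.+1) Kentry q qh sq n i.+1 k.+1.

End Defs.

From HB Require Import structures.
From mathcomp Require Import all_boot all_order all_algebra.
From mathcomp Require Import zify ring.
From Stdlib Require Import FunctionalExtensionality.
Set Implicit Arguments. Unset Strict Implicit. Unset Printing Implicit Defensive.
Import Order.TTheory GRing.Theory Num.Theory.
Local Open Scope ring_scope.

(* Read a word as a lattice path, x going up and y going down.  The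
   coefficient of a word of height 0 in Delta^(-2j) is then its path weight:
   the product of [h - 2j] over its up-steps and of [h] over its down-steps,
   h being the height before the step.  The Catalan condition comes for free,
   since a path dipping below 0 takes a down-step from height 0, of weight
   [0] = 0.  The coefficient of a word w in the (a,b)-entry of K^(j) is, up to
   phi and a sign, the weight of the framed path x^(b-1) w y^(2j+1-a), and in the
   claimed formula that of x^(2j+1-b) w~ y^(a-1), with w~ the word w with x
   and y interchanged.  The reflection h -> 2j - h maps w to w~ and only
   changes signs of step weights, as [-k] = -[k]; the frames contribute
   q-factorials whose quotient is the ratio relating phi to psi. *)

Fixpoint height (u : word) : int := if u is c :: u' then bar c + height u' else 0.

Lemma height_cat u v : height (u ++ v) = height u + height v.
Proof. by elim: u => [|c u IH] /=; rewrite ?add0r // IH addrA. Qed.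

Lemma height_nseq k c : height (nseq k c) = k%:Z * bar c.
Proof. by elim: k => [|k IH] /=; rewrite ?mul0r // IH -add1n PoszD mulrDl mul1r. Qed.

Lemma height_negb u : height (map negb u) = - height u.
Proof. by elim: u => [|c u IH] /=; rewrite ?oppr0 // IH opprD; case: c. Qed.

Lemma height_size u : height u = (size u)%:Z - 2 * (count_mem ly u)%:Z.
Proof. by elim: u => [|c u IH] //=; rewrite IH; case: c => /=; lia. Qed.

Lemma psumS c u i : psum (c :: u) i.+1 = bar c + psum u i.
Proof. by rewrite /psum big_ord_recl. Qed.

Lemma psum_size u : psum u (size u) = height u.
Proof. by elim: u => [|c u IH]; rewrite /= ?psumS ?IH // /psum big_ord0. Qed.

Definition frame (B C : nat) (w : word) : word := nseq B lx ++ w ++ nseq C ly.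

Lemma size_frame B C w : size (frame B C w) = (B + size w + C)%N.
Proof. by rewrite !size_cat !size_nseq addnA. Qed.

Lemma height_frame B C w : height (frame B C w) = B%:Z + height w - C%:Z.
Proof. by rewrite !height_cat !height_nseq /=; ring. Qed.

Section QInt.
Variables (F : fieldType) (q : F).

Lemma qintN k : qint q (- k) = - qint q k.
Proof. by rewrite /qint opprK -mulNr opprB. Qed.

Lemma qint0 : qint q 0 = 0.
Proof. by rewrite /qint oppr0 subrr mul0r. Qed.

Lemma qfact0 : qfact q 0 = 1.
Proof. by rewrite /qfact big_geq. Qed.

Lemma qfactS k : qfact q k.+1 = qfact q k * qint q k.+1.
Proof. by rewrite /qfact big_nat_recr. Qed.

Hypotheses (q_neq0 : q != 0) (q_nroot : forall k, (0 < k)%N -> q ^+ k != 1).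

Lemma qint_neq0 k : (0 < k)%N -> qint q k != 0.
Proof.
have qk_neq_inv j : (0 < j)%N -> q ^+ j - (q ^+ j)^-1 != 0.
  move=> j_gt0; rewrite subr_eq0; apply/negP => /eqP qj.
  have /negP[] : q ^+ (j + j) != 1 by rewrite q_nroot ?addn_gt0 ?j_gt0.
  by rewrite exprD {2}qj mulfV // expf_neq0.
move=> k_gt0; rewrite /qint -exprnN mulf_neq0 ?qk_neq_inv // invr_neq0 //.
by rewrite -[q]expr1 qk_neq_inv.
Qed.

Lemma qfact_neq0 k : qfact q k != 0.
Proof. by elim: k => [|k IH]; rewrite ?qfact0 ?oner_neq0 // qfactS mulf_neq0 ?qint_neq0. Qed.
End QInt.

Section PathWeight.
Variables (F : fieldType) (q : F) (m : int).

Fixpoint pathw (h : int) (u : word) : F :=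
  if u is c :: u' then qint q (h + divz (m * (bar c + 1)) 2) * pathw (h + bar c) u'
  else 1.

Lemma pathw_up h u : pathw h (lx :: u) = qint q (h + m) * pathw (h + 1) u.
Proof. by rewrite /= mulzK. Qed.

Lemma pathw_down h u : pathw h (ly :: u) = qint q h * pathw (h - 1) u.
Proof. by rewrite /= mulr0 div0z addr0. Qed.

Lemma pathw_cat h u v : pathw h (u ++ v) = pathw h u * pathw (h + height u) v.
Proof. by elim: u h => [|c u IH] h /=; rewrite ?addr0 ?mul1r // IH addrA mulrA. Qed.

Lemma pathw_prod h u :
  pathw h u = \prod_(i < size u) qint q (h + psum u i + divz (m * (bar (nth ly u i) + 1)) 2).
Proof.
elim: u h => [|c u IH] h /=; first by rewrite big_ord0.
rewrite big_ord_recl /= {1}/psum big_ord0 addr0 IH.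
by congr (_ * _); apply: eq_bigr => i _; rewrite psumS addrA.
Qed.

Lemma pathw_dip h u : 0 <= h ->
  ~~ all (fun i => 0 <= h + psum u i) (iota 1 (size u)) -> pathw h u = 0.
Proof.
elim: u h => [|c u IH] h h_ge0 //.
rewrite /= {1}/psum big_ord1 /= -(addn1 1) iotaDl all_map.
have -> : all (preim (addn 1) (fun i => 0 <= h + psum (c :: u) i)) (iota 1 (size u))
        = all (fun i => 0 <= h + bar c + psum u i) (iota 1 (size u)).
  by apply: eq_all => i /=; rewrite add1n psumS addrA.
case: (boolP (0 <= h + bar c)) => [hc /= /(IH _ hc) ->|]; first by rewrite mulr0.
case: c => /= [|h_neg _]; first lia.
by rewrite (_ : h = 0) ?mulr0 ?div0z ?qint0 ?mul0r //; lia.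
Qed.

Lemma pathw_descent h k : pathw (h + k)%N (nseq k ly) * qfact q h = qfact q (h + k).
Proof.
elim: k => [|k IH]; first by rewrite addn0 mul1r.
rewrite pathw_down (_ : (h + k.+1)%N%:Z - 1 = (h + k)%N) ?addnS; last by lia.
by rewrite -mulrA IH qfactS mulrC.
Qed.

Lemma Deltan_pathw k u :
  Deltan q m k u = if (size u == 2 * k)%N && (height u == 0) then pathw 0 u else 0.
Proof.
rewrite /Deltan /catalan psum_size.
case: (height u =P 0) => [h0|]; last by rewrite !andbF.
rewrite !andbT; case: (size u == 2 * k)%N => //=.
case: ifP => [_|not_above]; first by rewrite pathw_prod; apply: eq_bigr => i _; rewrite add0r.
apply/esym/pathw_dip => //; apply: contraFN not_above => /allP above.
apply/allP => i; rewrite mem_iota => i_lt.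
by rewrite -[psum u i]add0r above // mem_iota; lia.
Qed.

Lemma negsq_DeltaS k u :
  negsq (DeltaS q m) k u =
  if (k == size u) && (height u == 0) then (-1) ^+ (size u %/ 2) * pathw 0 u else 0.
Proof.
rewrite /negsq /DeltaS Deltan_pathw.
have even_u : height u = 0 -> ~~ odd (size u).
  by move=> h0; move: (height_size u); rewrite h0 => /eqP; lia.
case: k => [k|k] //=; case: (boolP (odd k)) => [k_odd|k_even] /=.
  rewrite ifN //; apply/andP => -[/eqP [ku] /eqP h0].
  by move: (even_u h0); rewrite -ku k_odd.
have k_half : (k %/ 2 * 2)%N = k by rewrite divnK // dvdn2.
have -> : (size u == 2 * (k %/ 2))%N = (k == size u :> int) by apply/eqP/eqP; lia.
by case: ifP; rewrite ?mulr0 // => /andP[/eqP [<-] _].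
Qed.
End PathWeight.

Section Reflection.
Variables (F : fieldType) (q : F) (n : nat).

Lemma pathw_reflect h w :
  pathw q (- n%:Z) h w = (-1) ^+ size w * pathw q (- n%:Z) (n%:Z - h) (map negb w).
Proof.
elim: w h => [|[] w IH] h; first by rewrite /= mul1r.
- rewrite map_cons pathw_up pathw_down IH (_ : h + - n%:Z = - (n%:Z - h)); last by ring.
  by rewrite qintN (_ : n%:Z - (h + 1) = n%:Z - h - 1) /= ?exprS; ring.
- rewrite map_cons pathw_down pathw_up IH (_ : n%:Z - h + - n%:Z = - h); last by ring.
  by rewrite qintN (_ : n%:Z - (h - 1) = n%:Z - h + 1) /= ?exprS; ring.
Qed.

Lemma pathw_ascent k : (k <= n)%N ->
  pathw q (- n%:Z) 0 (nseq k lx) * qfact q (n - k) = (-1) ^+ k * qfact q n.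
Proof.
move=> kn; rewrite pathw_reflect size_nseq map_nseq subr0 -mulrA.
by have := pathw_descent q (- n%:Z) (n - k) k; rewrite subnK // => ->.
Qed.

Lemma pathw_frame A B w : (A <= n)%N -> (B <= n)%N -> B%:Z + height w = (n - A)%N ->
  qfact q B * qfact q (n - A) * pathw q (- n%:Z) 0 (frame (n - B) A (map negb w))
  = (-1) ^+ (n + size w) * (qfact q A * qfact q (n - B))
    * pathw q (- n%:Z) 0 (frame B (n - A) w).
Proof.
move=> An Bn hw.
have descent0 (k : nat) : pathw q (- n%:Z) k (nseq k ly) = qfact q k.
  by have := pathw_descent q (- n%:Z) 0 k; rewrite qfact0 mulr1.
rewrite !pathw_cat !height_nseq height_negb /= !mulr1 !add0r.
rewrite (_ : (n - B)%N%:Z - height w = A); last by lia.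
rewrite hw !descent0 (pathw_reflect B%:Z w) (_ : n%:Z - B%:Z = (n - B)%N); last by lia.
have asc_B := pathw_ascent Bn.
have := pathw_ascent (leq_subr B n); rewrite subKn // => asc_nB.
set xB := pathw _ _ _ (nseq B lx) in asc_B *.
set xnB := pathw _ _ _ (nseq (n - B) lx) in asc_nB *.
set P := pathw _ _ _ (map negb w).
have sign : (-1) ^+ (n - B) = (-1) ^+ (n + size w) * (-1) ^+ size w * (-1) ^+ B :> F.
  rewrite -!exprD -signr_odd -[RHS]signr_odd !oddD oddB //.
  by case: (odd n); case: (odd B); case: (odd (size w)).
transitivity (xnB * qfact q B * (qfact q (n - A) * P * qfact q A)); first by ring.
transitivity ((-1) ^+ (n + size w) * (-1) ^+ size w * (xB * qfact q (n - B))
              * (qfact q A * P * qfact q (n - A))); last by ring.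
by rewrite asc_B asc_nB sign; ring.
Qed.

Hypotheses (q_neq0 : q != 0) (q_nroot : forall k, (0 < k)%N -> q ^+ k != 1).

Lemma negsq_Delta_frame_reflect A B w (k1 k2 : int) : (A <= n)%N -> (B <= n)%N ->
  k1 - (B + (n - A))%N%:Z = k2 - (n - B + A)%N%:Z ->
  negsq (DeltaS q (- n%:Z)) k1 (frame B (n - A) w)
  = qratio q n B.+1 A.+1 * negsq (DeltaS q (- n%:Z)) k2 (frame (n - B) A (map negb w)).
Proof.
move=> An Bn k12.
have := height_size (frame B (n - A) w); rewrite size_frame height_frame => height_u1.
rewrite !negsq_DeltaS !size_frame !height_frame size_map height_negb.
have -> : (k2 == (n - B + size w + A)%N) && ((n - B)%N%:Z - height w - A%:Z == 0)
        = (k1 == (B + size w + (n - A))%N) && (B%:Z + height w - (n - A)%N%:Z == 0).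
  by apply/andP/andP => -[/eqP ? /eqP ?]; split; apply/eqP; lia.
case: ifP => [/andP[/eqP k_eq /eqP h0]|_]; last by rewrite mulr0.
have half_sizes : (n + size w = (n - B + size w + A) %/ 2 + (B + size w + (n - A)) %/ 2)%N.
  by lia.
have hw : B%:Z + height w = (n - A)%N by lia.
have := pathw_frame An Bn hw.
set D1 := pathw _ _ _ (frame B _ _); set D2 := pathw _ _ _ (frame (n - B) _ _) => frame.
rewrite /qratio !subn1 /= !addn1 !subSS mulrCA mulrAC frame mulrAC mulfK ?mulf_neq0 ?qfact_neq0 //.
by rewrite half_sizes exprD -mulrA signrMK.
Qed.
End Reflection.

Section Series.
Variable F : fieldType.

Lemma lpowN c (k : nat) (f : ser F) : lpow c (- k%:Z) f = ldel c k f.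
Proof. by rewrite /lpow oppr_le0 abszN absz_nat. Qed.

Lemma rpowN c (k : nat) (f : ser F) : rpow c (- k%:Z) f = rdel c k f.
Proof. by rewrite /rpow oppr_le0 abszN absz_nat. Qed.

Lemma negsq_swapxy (f : ser F) : negsq (swapxy f) = swapxy (negsq f).
Proof. by []. Qed.

Lemma coef_frame s e (B C : nat) (f : ser F) k w :
  sscale s (tpow e (lpow lx (- B%:Z) (rpow ly (- C%:Z) f))) k w
  = s * f (k - e) (frame B C w).
Proof. by rewrite lpowN rpowN /sscale /tpow /ldel /rdel -catA. Qed.

Lemma coef_frame_swapxy s e (B C : nat) (f : ser F) k w :
  sscale s (tpow e (lpow ly (- B%:Z) (rpow lx (- C%:Z) (swapxy f)))) k w
  = s * f (k - e) (frame B C (map negb w)).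
Proof. by rewrite lpowN rpowN /sscale /tpow /ldel /rdel /swapxy -catA !map_cat !map_nseq. Qed.
End Series.

Theorem proposition6p6 (F : fieldType)
  (charF0 : [pchar F] =i pred0)
  (sqrtF : forall x : F, exists y : F, y ^+ 2 = x)
  (q qh : F) (q_neq0 : q != 0)
  (q_nroot : forall k : nat, (0 < k)%N -> q ^+ k != 1)
  (qhE : qh ^+ 2 = q)
  (n : nat) (n_gt0 : (0 < n)%N)
  (sq : F -> F) (sqE : forall x : F, sq x ^+ 2 = x)
  (sq_conv : forall a b : nat, (1 <= a <= n.+1)%N -> (1 <= b <= n.+1)%N ->
     sq (qratio q n b a) = qratio q n b a * sq (qratio q n a b))
  (a b : nat) (ha : (1 <= a <= n.+1)%N) (hb : (1 <= b <= n.+1)%N) :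
  Kmat q qh sq n (inord a.-1) (inord b.-1) =
  sscale (psiK q qh sq n a b)
    (tpow (b%:Z - a%:Z - n%:Z)
       (lpow ly (b%:Z - n%:Z - 1)
          (rpow lx (1 - a%:Z) (negsq (swapxy (DeltaS q (- n%:Z))))))).
Proof.
rewrite /psiK sq_conv // /Kmat mxE.
case: a ha => [|A] // /andP[_ An]; case: b hb => [|B] // /andP[_ Bn].
rewrite !inordK //= /Kentry /phiK; move: An Bn; rewrite !ltnS => An Bn.
have -> : 1 - B.+1%:Z = - B%:Z by lia.
have -> : 1 - A.+1%:Z = - A%:Z by lia.
have -> : A.+1%:Z - n%:Z - 1 = - (n - A)%N%:Z by lia.
have -> : B.+1%:Z - n%:Z - 1 = - (n - B)%N%:Z by lia.
apply: functional_extensionality => k; apply: functional_extensionality => w.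
rewrite coef_frame negsq_swapxy coef_frame_swapxy.
rewrite (negsq_Delta_frame_reflect q_neq0 q_nroot w (k2 := k - (B.+1%:Z - A.+1%:Z - n%:Z)) An Bn).
  by ring.
by lia.
Qed.
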